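(* Let $((x_n,y_n))_{n\in\mathbb N}$ be a sequence in $[0,\infty)^2$ such that $\sum_n(x_n,y_n)$ converges, and assume that $(a,b)\times(c,d)$ is a rectangular gap of $E(x_n,y_n)$. Let $k:=\max\{n\in\mathbb N:\ x_n\geq b-a \text{ or } y_n\geq d-c\}$ (this set of indices is finite and non-empty). Then $(b,d)\in F_k$, and there exists $f\in F_k$ such that $(a,c)=f+\sum_{n>k}(x_n,y_n)$.
   Context: $E(x_n,y_n):=\{\sum_{n\in B}(x_n,y_n):\ B\subset\mathbb N\}$ is the achievement set of the series, and $F_k:=\{\sum_{i\in B}(x_i,y_i):\ B\subset\{1,\dots,k\}\}$ is the set of $k$-initial subsums. For $A\subset\mathbb R^2$ and reals $a<b$, $c<d$, the set $(a,b)\times(c,d)$ is a rectangular gap of $A$ if $([a,b]\times[c,d])\cap A=\{(a,c),(b,d)\}$. *)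

From Stdlib Require Import Reals.
From Coquelicot Require Import Coquelicot.
Open Scope R_scope.

(* Indices are 0-based: the paper's N = {1,2,...} is shifted to nat = {0,1,...}. *)

Definition restrict (B : nat -> bool) (u : nat -> R) : nat -> R :=
  fun n => if B n then u n else 0.

Definition achievement_set (x y : nat -> R) (p : R * R) : Prop :=
  exists B : nat -> bool,
    is_series (restrict B x) (fst p) /\ is_series (restrict B y) (snd p).

Definition initial_subsums (x y : nat -> R) (k : nat) (p : R * R) : Prop :=
  exists B : nat -> bool,
    fst p = sum_f_R0 (restrict B x) k /\ snd p = sum_f_R0 (restrict B y) k.

Definition rectangular_gap (A : R * R -> Prop) (a b c d : R) : Prop :=
  a < b /\ c < d /\
  forall p : R * R,
    (a <= fst p <= b /\ c <= snd p <= d /\ A p) <-> (p = (a, c) \/ p = (b, d)).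

Definition tail_sum (u : nat -> R) (k : nat) : R := Series (fun n => u (S k + n)%nat).

(* Toggling a single term (x_n, y_n) moves a corner
   by that vector, and if both coordinates are below the side lengths of the rectangle the
   moved point still lies in the closed rectangle, hence must be a corner itself: so
   (x_n, y_n) = 0.  Beyond the last "large" index k all terms are small, so the sum
   representing (b,d) uses no nonzero term after k, while the one representing (a,c)
   uses every nonzero term after k. *)
From Stdlib Require Import Reals Lra Lia Classical.
From Coquelicot Require Import Coquelicot.
Open Scope R_scope.

Lemma sum_n_indicator (n N : nat) (c : R) :
  sum_n (fun m => if Nat.eqb m n then c else 0) N = if Nat.leb n N then c else 0.
Proof.
  induction N as [|N IH].
  - rewrite sum_O; destruct n; reflexivity.
  - rewrite sum_Sn, IH; change (plus ?u ?v) with (Rplus u v).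
    destruct (Nat.eqb_spec (S N) n) as [<-|].
    + rewrite Nat.leb_refl; replace (Nat.leb (S N) N) with false
        by (symmetry; apply Nat.leb_gt; lia); lra.
    + destruct (Nat.leb_spec n N), (Nat.leb_spec n (S N)); lia || lra.
Qed.

Lemma is_series_indicator (n : nat) (c : R) :
  is_series (fun m => if Nat.eqb m n then c else 0) c.
Proof.
  apply (filterlim_ext_loc (fun _ => c)); [|apply filterlim_const].
  exists n; intros N HN; rewrite sum_n_indicator.
  destruct (Nat.leb_spec n N); [reflexivity|lia].
Qed.

Lemma is_series_zero : is_series (fun _ : nat => 0) 0.
Proof.
  apply (is_series_ext (fun m => if Nat.eqb m 0 then 0 else 0)).
  - intros m; destruct (Nat.eqb m 0); reflexivity.
  - apply is_series_indicator.
Qed.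

Lemma is_series_ge0 (u : nat -> R) (s : R) :
  (forall n, 0 <= u n) -> is_series u s -> 0 <= s.
Proof.
  intros hu Hs; rewrite <- (is_series_unique _ _ Hs),
    <- (is_series_unique _ _ is_series_zero).
  apply Series_le; [intros n; split; [lra|apply hu]|exists s; exact Hs].
Qed.

Lemma is_series_split (u : nat -> R) (s : R) (k : nat) :
  is_series u s -> s = sum_f_R0 u k + Series (fun n => u (S k + n)%nat).
Proof.
  intros Hs; rewrite <- (is_series_unique _ _ Hs).
  rewrite (Series_incr_n u (S k)); [reflexivity|lia|exists s; exact Hs].
Qed.

Lemma is_series_eventually_zero (u : nat -> R) (s : R) (k : nat) :
  is_series u s -> (forall n, (k < n)%nat -> u n = 0) -> s = sum_f_R0 u k.
Proof.
  intros Hs Hu; rewrite (is_series_split u s k Hs).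
  rewrite (Series_ext _ (fun _ => 0)), (is_series_unique _ _ is_series_zero);
    [ring|intros n; apply Hu; lia].
Qed.

Definition update (B : nat -> bool) (n : nat) (v : bool) : nat -> bool :=
  fun m => if Nat.eqb m n then v else B m.

Lemma is_series_restrict_update (B : nat -> bool) (u : nat -> R) (s : R) (n : nat)
    (v : bool) :
  is_series (restrict B u) s ->
  is_series (restrict (update B n v) u)
    (s + ((if v then u n else 0) - (if B n then u n else 0))).
Proof.
  intros Hs.
  eapply is_series_ext;
    [|exact (is_series_plus _ _ _ _ Hs (is_series_indicator n _))].
  intros m; unfold plus, restrict, update; simpl.
  destruct (Nat.eqb_spec m n) as [->|]; [destruct v, (B n)|]; lra.
Qed.

Lemma achievement_set_remove (x y : nat -> R) (B : nat -> bool) (sx sy : R) (n : nat) :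
  is_series (restrict B x) sx -> is_series (restrict B y) sy -> B n = true ->
  achievement_set x y (sx - x n, sy - y n).
Proof.
  intros Hx Hy Bn; exists (update B n false); simpl.
  pose proof (is_series_restrict_update B x sx n false Hx) as Ux.
  pose proof (is_series_restrict_update B y sy n false Hy) as Uy.
  rewrite Bn in Ux, Uy.
  replace (sx - x n) with (sx + (0 - x n)) by ring.
  replace (sy - y n) with (sy + (0 - y n)) by ring.
  split; assumption.
Qed.

Lemma achievement_set_add (x y : nat -> R) (B : nat -> bool) (sx sy : R) (n : nat) :
  is_series (restrict B x) sx -> is_series (restrict B y) sy -> B n = false ->
  achievement_set x y (sx + x n, sy + y n).
Proof.
  intros Hx Hy Bn; exists (update B n true); simpl.
  pose proof (is_series_restrict_update B x sx n true Hx) as Ux.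
  pose proof (is_series_restrict_update B y sy n true Hy) as Uy.
  rewrite Bn in Ux, Uy.
  replace (sx + x n) with (sx + (x n - 0)) by ring.
  replace (sy + y n) with (sy + (y n - 0)) by ring.
  split; assumption.
Qed.

Lemma rectangular_gap_upper_corner (A : R * R -> Prop) (a b c d u v : R) :
  rectangular_gap A a b c d -> A (b - u, d - v) ->
  0 <= u < b - a -> 0 <= v < d - c -> u = 0 /\ v = 0.
Proof.
  intros [hab [hcd hG]] HA hu hv.
  destruct (proj1 (hG (b - u, d - v))) as [E|E]; simpl;
    [repeat split; lra || assumption| |]; injection E; lra.
Qed.

Lemma rectangular_gap_lower_corner (A : R * R -> Prop) (a b c d u v : R) :
  rectangular_gap A a b c d -> A (a + u, c + v) ->
  0 <= u < b - a -> 0 <= v < d - c -> u = 0 /\ v = 0.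
Proof.
  intros [hab [hcd hG]] HA hu hv.
  destruct (proj1 (hG (a + u, c + v))) as [E|E]; simpl;
    [repeat split; lra || assumption| |]; injection E; lra.
Qed.

Lemma rectangular_gap_corners (A : R * R -> Prop) (a b c d : R) :
  rectangular_gap A a b c d -> A (a, c) /\ A (b, d).
Proof.
  intros [_ [_ hG]].
  split; [apply (hG (a, c)); left|apply (hG (b, d)); right]; reflexivity.
Qed.

Lemma nat_max_exists (P : nat -> Prop) (N : nat) :
  (forall n, (N <= n)%nat -> ~ P n) -> (exists n, P n) ->
  exists k, P k /\ forall n, P n -> (n <= k)%nat.
Proof.
  revert P; induction N as [|N IH]; intros P HN [n Pn].
  - exfalso; exact (HN n (Nat.le_0_l n) Pn).
  - destruct (classic (P N)) as [PN|nPN].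
    + exists N; split; [exact PN|].
      intros m Pm; destruct (Nat.le_gt_cases m N); [assumption|].
      exfalso; exact (HN m ltac:(lia) Pm).
    + apply IH; [|exists n; exact Pn].
      intros m Hm; destruct (Nat.eq_dec m N) as [->|]; [exact nPN|apply HN; lia].
Qed.

Section RectangularGap.

Variables (x y : nat -> R) (a b c d : R).
Hypotheses (hx : forall n, 0 <= x n) (hy : forall n, 0 <= y n).
Hypothesis hgap : rectangular_gap (achievement_set x y) a b c d.

Local Notation large n := (b - a <= x n \/ d - c <= y n).

Lemma small_term_bounds (n : nat) :
  ~ large n -> 0 <= x n < b - a /\ 0 <= y n < d - c.
Proof.
  intros small; pose proof (hx n); pose proof (hy n).
  split; split; try assumption; apply Rnot_le_lt; tauto.
Qed.

Lemma upper_corner_small_term (B : nat -> bool) (n : nat) :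
  is_series (restrict B x) b -> is_series (restrict B y) d ->
  ~ large n -> restrict B x n = 0 /\ restrict B y n = 0.
Proof.
  intros Hx Hy small; unfold restrict; destruct (B n) eqn:Bn; [|lra].
  destruct (small_term_bounds n small) as [hxn hyn].
  apply (rectangular_gap_upper_corner _ a b c d _ _ hgap); try assumption.
  exact (achievement_set_remove x y B b d n Hx Hy Bn).
Qed.

Lemma lower_corner_small_term (B : nat -> bool) (n : nat) :
  is_series (restrict B x) a -> is_series (restrict B y) c ->
  ~ large n -> restrict B x n = x n /\ restrict B y n = y n.
Proof.
  intros Hx Hy small; unfold restrict; destruct (B n) eqn:Bn; [tauto|].
  destruct (small_term_bounds n small) as [hxn hyn].
  assert (x n = 0 /\ y n = 0) as [-> ->]; [|lra].
  apply (rectangular_gap_lower_corner _ a b c d _ _ hgap); try assumption.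
  exact (achievement_set_add x y B a c n Hx Hy Bn).
Qed.

Lemma large_term_exists : exists n, large n.
Proof.
  destruct (rectangular_gap_corners _ a b c d hgap)
    as [[B1 [H1x _]] [B2 [H2x H2y]]]; simpl in *.
  assert (ha : 0 <= a).
  { refine (is_series_ge0 _ _ _ H1x); intros n; unfold restrict.
    destruct (B1 n); [apply hx|apply Rle_refl]. }
  apply NNPP; intros none.
  assert (hb : b = 0).
  { rewrite <- (is_series_unique _ _ H2x), <- (is_series_unique _ _ is_series_zero).
    apply Series_ext; intros n.
    apply (upper_corner_small_term B2 n H2x H2y); intros Ln; apply none; exists n; exact Ln. }
  destruct hgap as [hab _]; lra.
Qed.

Lemma large_terms_bounded :
  ex_series x -> ex_series y -> exists N, forall n, (N <= n)%nat -> ~ large n.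
Proof.
  intros cx cy.
  destruct hgap as [hab [hcd _]].
  destruct (proj1 (is_lim_seq_Reals _ _) (ex_series_lim_0 _ cx) (b - a) ltac:(lra))
    as [Nx HNx].
  destruct (proj1 (is_lim_seq_Reals _ _) (ex_series_lim_0 _ cy) (d - c) ltac:(lra))
    as [Ny HNy].
  exists (Nx + Ny)%nat; intros n Hn.
  specialize (HNx n ltac:(lia)); specialize (HNy n ltac:(lia)).
  unfold R_dist in HNx, HNy; rewrite Rminus_0_r, Rabs_right in HNx, HNy
    by apply Rle_ge, hx || apply Rle_ge, hy.
  lra.
Qed.

Variable k : nat.
Hypothesis small_after_k : forall n, (k < n)%nat -> ~ large n.

Lemma upper_corner_initial_subsum : initial_subsums x y k (b, d).
Proof.
  destruct (rectangular_gap_corners _ a b c d hgap) as [_ [B [Hx Hy]]]; simpl in *.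
  exists B; simpl; split; apply (is_series_eventually_zero _ _ k Hx) ||
    apply (is_series_eventually_zero _ _ k Hy); intros n Hn;
    apply (upper_corner_small_term B n Hx Hy), small_after_k, Hn.
Qed.

Lemma lower_corner_decomposition :
  exists f : R * R, initial_subsums x y k f /\
    a = fst f + tail_sum x k /\ c = snd f + tail_sum y k.
Proof.
  destruct (rectangular_gap_corners _ a b c d hgap) as [[B [Hx Hy]] _]; simpl in *.
  exists (sum_f_R0 (restrict B x) k, sum_f_R0 (restrict B y) k).
  split; [exists B; split; reflexivity|]; simpl; unfold tail_sum.
  rewrite (is_series_split _ _ k Hx) at 1; rewrite (is_series_split _ _ k Hy) at 1.
  split; f_equal; apply Series_ext; intros n;
    apply (lower_corner_small_term B _ Hx Hy), small_after_k; lia.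
Qed.

End RectangularGap.

Theorem mainTheorem17 (x y : nat -> R) (a b c d : R)
  (hx : forall n, 0 <= x n) (hy : forall n, 0 <= y n)
  (cx : ex_series x) (cy : ex_series y)
  (hgap : rectangular_gap (achievement_set x y) a b c d) :
  let S := fun n : nat => b - a <= x n \/ d - c <= y n in
  (exists k : nat, S k /\ forall n, S n -> (n <= k)%nat) /\
  (forall k : nat, S k -> (forall n, S n -> (n <= k)%nat) ->
     initial_subsums x y k (b, d) /\
     exists f : R * R, initial_subsums x y k f /\
       a = fst f + tail_sum x k /\ c = snd f + tail_sum y k).
Proof.
  intros S; split.
  - destruct (large_terms_bounded x y a b c d hx hy hgap cx cy) as [N HN].
    exact (nat_max_exists S N HN (large_term_exists x y a b c d hx hy hgap)).
  - intros k _ kmax.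
    assert (small_after_k : forall n, (k < n)%nat -> ~ S n)
      by (intros n Hn Sn; specialize (kmax n Sn); lia).
    split.
    + exact (upper_corner_initial_subsum x y a b c d hx hy hgap k small_after_k).
    + exact (lower_corner_decomposition x y a b c d hx hy hgap k small_after_k).
Qed.
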